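(* Let $Y\in\mathbb{R}^{D\times N}$ (the data matrix after subtracting the sample mean of the columns from each column), let $\hat d\in\mathbb{N}$, $\hat d\ge1$, and let $\epsilon>0$. Define $$f(L,R,\Pi)=\tfrac12\|(Y-LR')\Pi^{-1/2}\|_F^2+\tfrac D2\log|\Pi|$$ on the feasible set $\mathcal S=\mathcal S_L\times\mathcal S_R\times\mathcal S_\Pi$, where $\mathcal S_L=\mathbb{R}^{D\times\hat d}$, $\mathcal S_R=\mathbb{R}^{N\times\hat d}$, and $\mathcal S_\Pi$ is the set of $N\times N$ diagonal matrices with all diagonal entries in $[\epsilon,\infty)$, and consider the problem $\min f(L,R,\Pi)$ subject to $(L,R,\Pi)\in\mathcal S$. Initialize as follows: with $Y=\hat U\hat\Sigma\hat V'$ an SVD, set $L_0=\hat U_{1:\hat d}\hat\Sigma_{1:\hat d}^{1/2}$, $R_0=\hat V_{1:\hat d}\hat\Sigma_{1:\hat d}^{1/2}$, $\nu_0=\max\!\big(\max_j \tfrac1D\|(Y-L_0R_0')e_j\|_2^2,\ \epsilon\big)$ and $\Pi_0=\nu_0 I$. Then generate $\{(L_t,R_t,\Pi_t)\}$ by alternating minimization (block nonlinear Gauss–Seidel), each block being updated to an exact minimizer of $f$ over its feasible set with the other blocks at their most recent values: $$L_{t+1}=Y\Pi_t^{-1}R_t(R_t'\Pi_t^{-1}R_t)^{-1},\quad R_{t+1}=Y'L_{t+1}(L_{t+1}'L_{t+1})^{-1},$$ $$(\Pi_{t+1})_{jj}=\max\!\Big(\tfrac1D\|(Y-L_{t+1}R_{t+1}')e_j\|_2^2,\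 \epsilon\Big),\ j=1,\dots,N.$$ Then the limit points of the sequence $\{(L_t,R_t,\Pi_t)\}$ are critical points of this constrained problem.
   Context: $\|\cdot\|_F$ is the Frobenius norm, $|\Pi|$ the determinant, $e_j$ the $j$-th standard basis vector, $\hat U_{1:\hat d}$, $\hat V_{1:\hat d}$ the first $\hat d$ left/right singular vectors and $\hat\Sigma_{1:\hat d}$ the corresponding $\hat d\times\hat d$ diagonal matrix of largest singular values. A critical point of $\min_{w\in\mathcal S}f(w)$ (with $f$ continuously differentiable and $\mathcal S$ closed and convex) is a point $w^*\in\mathcal S$ with $\langle\nabla f(w^* ),w-w^*\rangle\ge0$ for all $w\in\mathcal S$. The matrix inverses in the updates are assumed to exist. *)

From HB Require Import structures.
From mathcomp Require Import all_boot all_order all_algebra.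
From mathcomp Require Import all_classical all_reals all_analysis.
Set Implicit Arguments. Unset Strict Implicit. Unset Printing Implicit Defensive.
Import Order.TTheory GRing.Theory Num.Theory.
Import numFieldNormedType.Exports.
Local Open Scope ring_scope.
Local Open Scope classical_set_scope.

(* The diagonal matrix Pi (N x N) is represented by its diagonal p : 'rV_N. *)
Definition var_t (R : realType) (D N d : nat) : Type :=
  ('M[R]_(D, d) * 'M[R]_(N, d) * 'rV[R]_N)%type.

Definition fobj (R : realType) (D N d : nat) (Y : 'M[R]_(D, N))
  (w : var_t R D N d) : R :=
  let: (L, Rm, p) := w in
  2^-1 * (\sum_(i < D) \sum_(j < N) ((Y - L *m Rm^T) i j) ^+ 2 / p 0 j)
  + D%:R / 2 * \sum_(j < N) ln (p 0 j).

Definition feas (R : realType) (D N d : nat) (eps : R) : set (var_t R D N d) :=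
  [set w : var_t R D N d | forall j : 'I_N, eps <= w.2 0 j].

(* critical point of min_{w in S} f : wstar in S and <grad f(wstar), w - wstar> >= 0,
   the inner product with the gradient being the differential 'd f wstar. *)
Definition critical_point (R : realType) (D N d : nat)
  (f : var_t R D N d -> R) (S : set (var_t R D N d)) (ws : var_t R D N d) :=
  [/\ S ws, differentiable f ws & forall w, S w -> 0 <= 'd f ws (w - ws)].

Definition colres (R : realType) (D N d : nat) (Y : 'M[R]_(D, N))
  (L : 'M[R]_(D, d)) (Rm : 'M[R]_(N, d)) (j : 'I_N) : R :=
  D%:R^-1 * \sum_(i < D) ((Y - L *m Rm^T) i j) ^+ 2.

Definition diag_inv (R : realType) (N : nat) (p : 'rV[R]_N) : 'M[R]_N :=
  diag_mx (\row_j (p 0 j)^-1).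

From HB Require Import structures.
From mathcomp Require Import all_boot all_order all_algebra.
From mathcomp Require Import all_classical all_reals all_analysis.
From mathcomp Require Import lra ring.
Import Order.TTheory GRing.Theory Num.Theory.
Import numFieldNormedType.Exports.
Local Open Scope ring_scope.
Local Open Scope classical_set_scope.

(* The R-update does not depend on Pi: row j of R only enters column j of the
   residual, whose weight 1/Pi_jj is a common factor, so R_{t+1} is the
   weighted least-squares solution for every Pi.  Hence the R- and Pi-updates
   together minimize f exactly over the joint block (R, Pi), and the iteration
   is a two-block Gauss-Seidel method.  Along it f is nonincreasing; passing to
   the limit in the two block-optimality inequalities shows that a limit point
   minimizes f in L, and in (R, Pi) over the closed convex set S_R x S_Pi.  As
   f is differentiable at feasible points, the directional derivative towards
   any feasible point, split along the two blocks, is then nonnegative.  Of the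
   initialization only Pi_0 >= eps matters. *)

Section differential.
Context {R : realType}.

Lemma differentiable_fst {U W : normedModType R} (x : U * W) :
  differentiable (@fst U W) x.
Proof.
have fst_linear : linear (@fst U W) by move=> a [u1 w1] [u2 w2].
pose f : {linear (U * W)%type -> U} :=
  HB.pack (@fst U W) (GRing.isLinear.Build _ _ _ _ _ fst_linear).
by rewrite (_ : fst = f) //; apply: linear_differentiable => y; exact: cvg_fst.
Qed.

Lemma differentiable_snd {U W : normedModType R} (x : U * W) :
  differentiable (@snd U W) x.
Proof.
have snd_linear : linear (@snd U W) by move=> a [u1 w1] [u2 w2].
pose f : {linear (U * W)%type -> W} :=
  HB.pack (@snd U W) (GRing.isLinear.Build _ _ _ _ _ snd_linear).
by rewrite (_ : snd = f) //; apply: linear_differentiable => y; exact: cvg_snd.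
Qed.

Lemma diff_ge0_of_segment_min (V : normedModType R) (f : V -> R) (x v : V) :
  differentiable f x -> (forall h, 0 < h <= 1 -> f x <= f (h *: v + x)) ->
  0 <= 'd f x v.
Proof.
move=> df fmin; rewrite -deriveE //.
have D_cvg : derivable f x v by exact: diff_derivable.
have quot_cvg : (fun h => h^-1 *: ((f \o shift x) (h *: v) - f x)) @ 0^'+ --> 'D_v f x.
  move=> A /D_cvg /nbhs_ballP [e e_pos eA]; exists e => // h ball_h h_pos.
  by apply: eA => //; rewrite gt_eqF.
apply: (ler_cvg_to (cvg_cst 0) quot_cvg); near=> h.
have h_pos : 0 < h by near: h; exact: nbhs_right_gt.
have h_le1 : h <= 1 by apply: ltW; near: h; exact: nbhs_right_lt.
rewrite /= /shift; apply: mulr_ge0; first by rewrite invr_ge0 ltW.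
by rewrite subr_ge0; apply: fmin; rewrite h_pos h_le1.
Unshelve. all: by end_near.
Qed.

End differential.

Section alternating_minimization.
Context {R : realType} {X Y : topologicalType}.
Variables (f : X -> Y -> R) (S : set Y) (x : nat -> X) (y : nat -> Y).
Hypothesis S_closed : closed S.
Hypothesis f_cont :
  forall a b, S b -> {for (a, b), continuous (fun z => f z.1 z.2)}.
Hypothesis y_in_S : forall t, S (y t).
Hypothesis x_step : forall t a, f (x t.+1) (y t) <= f a (y t).
Hypothesis y_step : forall t b, S b -> f (x t.+1) (y t.+1) <= f (x t.+1) b.

Let value_nonincreasing : nonincreasing_seq (fun t => f (x t) (y t)).
Proof.
apply/nonincreasing_seqP => t /=.
exact: le_trans (y_step t (y t) (y_in_S t)) (x_step t (x t)).
Qed.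

Variables (phi : nat -> nat) (xs : X) (ys : Y).
Hypothesis phi_incr : forall n, (phi n < phi n.+1)%N.
Hypothesis sub_cvg : (x (phi n), y (phi n)) @[n --> \oo] --> (xs, ys).

Let y_cvg : y (phi n) @[n --> \oo] --> ys.
Proof. exact: (cvg_comp _ snd sub_cvg cvg_snd). Qed.

Let limit_in : S ys.
Proof.
apply: (@closed_cvg _ _ \oo _ (fun n => y (phi n)) S S_closed _ _ y_cvg).
exact: nearW.
Qed.

Let x_cvg : x (phi n) @[n --> \oo] --> xs.
Proof. exact: (cvg_comp _ fst sub_cvg cvg_fst). Qed.

Let f_cvg (u : nat -> X) (v : nat -> Y) a b : S b ->
  u @ \oo --> a -> v @ \oo --> b -> f (u n) (v n) @[n --> \oo] --> f a b.
Proof.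
move=> Sb ua vb.
exact: (cvg_comp (fun n => (u n, v n)) (fun z => f z.1 z.2) (cvg_pair ua vb)
  (f_cont a b Sb)).
Qed.

Let value_cvg : f (x (phi n)) (y (phi n)) @[n --> \oo] --> f xs ys.
Proof. exact: f_cvg limit_in x_cvg y_cvg. Qed.

Let limit_x_min a : f xs ys <= f a ys.
Proof.
have value_shift_cvg := value_cvg; rewrite -cvg_shiftS /= in value_shift_cvg.
apply: (ler_cvg_to value_shift_cvg
  (f_cvg (fun=> a) _ a ys limit_in (cvg_cst a) y_cvg)).
apply: nearW => n; apply: le_trans (x_step (phi n) a).
apply: le_trans (y_step (phi n) (y (phi n)) (y_in_S (phi n))).
exact: value_nonincreasing.
Qed.

Let limit_y_min b : S b -> f xs ys <= f xs b.
Proof.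
move=> Sb.
apply: (ler_cvg_to value_cvg (f_cvg _ (fun=> b) xs b Sb x_cvg (cvg_cst b))).
near=> n; have : (0 < phi n)%N.
  near: n; exists 1%N => // -[|m] // _.
  exact: leq_ltn_trans (leq0n _) (phi_incr m).
by case: (phi n) => // t _; exact: y_step.
Unshelve. all: by end_near.
Qed.

Lemma alt_min_limit_point :
  [/\ S ys, forall a, f xs ys <= f a ys & forall b, S b -> f xs ys <= f xs b].
Proof. by split; [exact: limit_in | exact: limit_x_min | exact: limit_y_min]. Qed.

End alternating_minimization.

Section weighted_norm.
Context {R : realType} {D N : nat}.
Variable p : 'rV[R]_N.

Definition wnorm (E : 'M[R]_(D, N)) := \sum_i \sum_j E i j ^+ 2 / p 0 j.
Definition wdot (A B : 'M[R]_(D, N)) := \sum_i \sum_j A i j * B i j / p 0 j.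

Lemma wnormB A B : wnorm (A - B) = wnorm A - wdot A B *+ 2 + wnorm B.
Proof.
rewrite /wnorm /wdot -sumrMnl -sumrB -big_split /=; apply: eq_bigr => i _.
rewrite -sumrMnl -sumrB -big_split /=; apply: eq_bigr => j _.
rewrite !mxE; ring.
Qed.

Lemma wnorm_le_subr A B : (forall j, 0 <= p 0 j) -> wdot A B = 0 ->
  wnorm A <= wnorm (A - B).
Proof.
move=> p_ge0 AB0; rewrite wnormB AB0 mul0rn subr0 lerDl.
by apply: sumr_ge0 => i _; apply: sumr_ge0 => j _; rewrite divr_ge0 ?sqr_ge0.
Qed.

Lemma wdot_mul_trmx_eq0r {d} A (B : 'M[R]_(D, d)) (C : 'M[R]_(N, d)) :
  A *m diag_inv p *m C = 0 -> wdot A (B *m C^T) = 0.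
Proof.
move=> ApC0; rewrite /wdot.
transitivity (\sum_i \sum_k B i k * (A *m diag_inv p *m C) i k).
  apply: eq_bigr => i _.
  under eq_bigr do rewrite mxE mulr_sumr mulr_suml.
  rewrite exchange_big /=; apply: eq_bigr => k _.
  rewrite mul_mx_diag !mxE mulr_sumr; apply: eq_bigr => j _.
  by rewrite !mxE; ring.
by rewrite ApC0; apply: big1 => i _; apply: big1 => k _; rewrite mxE mulr0.
Qed.

Lemma wdot_mul_trmx_eq0l {d} A (B : 'M[R]_(D, d)) (C : 'M[R]_(N, d)) :
  B^T *m A = 0 -> wdot A (B *m C^T) = 0.
Proof.
move=> BA0; rewrite /wdot exchange_big /=.
transitivity (\sum_j \sum_k C j k * (B^T *m A) k j / p 0 j).
  apply: eq_bigr => j _.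
  under eq_bigr do rewrite mxE mulr_sumr mulr_suml.
  rewrite exchange_big /=; apply: eq_bigr => k _.
  rewrite !mxE mulr_sumr mulr_suml; apply: eq_bigr => i _; rewrite !mxE; ring.
by rewrite BA0; apply: big1 => j _; apply: big1 => k _; rewrite mxE mulr0 mul0r.
Qed.

End weighted_norm.

Definition L_update {R : realType} {D N d : nat} (Y : 'M[R]_(D, N))
    (Rm : 'M[R]_(N, d)) (p : 'rV[R]_N) : 'M[R]_(D, d) :=
  Y *m diag_inv p *m Rm *m invmx (Rm^T *m diag_inv p *m Rm).

Definition R_update {R : realType} {D N d : nat} (Y : 'M[R]_(D, N))
    (L : 'M[R]_(D, d)) : 'M[R]_(N, d) :=
  Y^T *m L *m invmx (L^T *m L).

Definition p_update {R : realType} {D N d : nat} (Y : 'M[R]_(D, N)) (eps : R)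
    (L : 'M[R]_(D, d)) (Rm : 'M[R]_(N, d)) : 'rV[R]_N :=
  \row_j Num.max (colres Y L Rm j) eps.

Lemma gauss_nll_clamped_min {R : realType} (c n eps q : R) :
  0 <= c -> 0 < n -> 0 < eps -> eps <= q ->
  2^-1 * (c / Num.max (n^-1 * c) eps) + n / 2 * ln (Num.max (n^-1 * c) eps)
  <= 2^-1 * (c / q) + n / 2 * ln q.
Proof.
move=> c_ge0 n_gt0 eps_gt0 eps_le_q; set a := Num.max _ _.
have a_gt0 : 0 < a by rewrite lt_max eps_gt0 orbT.
have q_gt0 : 0 < q by apply: lt_le_trans eps_le_q.
have sign_ok : 0 <= (a - q) * (c - n * a).
  rewrite /a; case: (leP (n^-1 * c) eps) => [c_small|_].
    by rewrite mulr_le0 // subr_le0 // -ler_pdivrMl.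
  by rewrite mulVKf ?gt_eqF // subrr mulr0.
(* By ln x <= x - 1 the objective gap is at most -(a - q) (c - n a) / (a q). *)
have ln_le : ln a - ln q <= a / q - 1.
  rewrite -ln_div ?posrE // -[X in ln X](subrK 1) addrC.
  by apply: le_ln1Dx; rewrite ltrBrDl addrN divr_gt0.
have gap : c / q - c / a + n * (1 - a / q) = (a - q) * (c - n * a) / (a * q).
  by field; rewrite !gt_eqF.
have : 0 <= (a - q) * (c - n * a) / (a * q) by rewrite divr_ge0 // mulr_ge0 // ltW.
rewrite -gap => gap_ge0.
have : n * (ln a - ln q) <= n * (a / q - 1) by rewrite ler_pM2l.
lra.
Qed.

Section objective.
Context {R : realType} {D N d : nat}.
Variable Y : 'M[R]_(D, N).
Implicit Types (L : 'M[R]_(D, d)) (Rm : 'M[R]_(N, d)) (p : 'rV[R]_N).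

Lemma fobjE L Rm p :
  fobj Y (L, Rm, p)
  = 2^-1 * wnorm p (Y - L *m Rm^T) + D%:R / 2 * \sum_j ln (p 0 j).
Proof. by []. Qed.

Lemma fobj_colE L Rm p :
  fobj Y (L, Rm, p)
  = \sum_j (2^-1 * ((\sum_i ((Y - L *m Rm^T) i j) ^+ 2) / p 0 j)
            + D%:R / 2 * ln (p 0 j)).
Proof.
rewrite fobjE /wnorm exchange_big big_split /= -!mulr_sumr.
by congr (_ * _ + _); apply: eq_bigr => j _; rewrite mulr_suml.
Qed.

Lemma L_update_normal Rm p : Rm^T *m diag_inv p *m Rm \in unitmx ->
  (Y - L_update Y Rm p *m Rm^T) *m diag_inv p *m Rm = 0.
Proof.
move=> Gram_unit; rewrite !mulmxBl.
have -> : L_update Y Rm p *m Rm^T *m diag_inv p *m Rm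
          = L_update Y Rm p *m (Rm^T *m diag_inv p *m Rm) by rewrite !mulmxA.
by rewrite mulmxKV ?subrr.
Qed.

Lemma R_update_normal L : L^T *m L \in unitmx ->
  L^T *m (Y - L *m (R_update Y L)^T) = 0.
Proof.
move=> Gram_unit; rewrite /R_update !trmx_mul trmx_inv trmx_mul !trmxK.
by rewrite mulmxBr !mulmxA mulmxV // mul1mx subrr.
Qed.

Lemma fobj_L_update_min L Rm p : (forall j, 0 <= p 0 j) ->
  Rm^T *m diag_inv p *m Rm \in unitmx ->
  fobj Y (L_update Y Rm p, Rm, p) <= fobj Y (L, Rm, p).
Proof.
move=> p_ge0 Gram_unit; rewrite !fobjE lerD2r ler_pM2l ?invr_gt0 //.
have -> : Y - L *m Rm^T
          = (Y - L_update Y Rm p *m Rm^T) - (L - L_update Y Rm p) *m Rm^T.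
  by rewrite mulmxBl opprB addrA subrK.
by apply: wnorm_le_subr => //; apply: wdot_mul_trmx_eq0r; exact: L_update_normal.
Qed.

Lemma fobj_R_update_min L Rm p : (forall j, 0 <= p 0 j) -> L^T *m L \in unitmx ->
  fobj Y (L, R_update Y L, p) <= fobj Y (L, Rm, p).
Proof.
move=> p_ge0 Gram_unit; rewrite !fobjE lerD2r ler_pM2l ?invr_gt0 //.
have -> : Y - L *m Rm^T
          = (Y - L *m (R_update Y L)^T) - L *m (Rm - R_update Y L)^T.
  by rewrite linearB /= mulmxBr opprB addrA subrK.
by apply: wnorm_le_subr => //; apply: wdot_mul_trmx_eq0l; exact: R_update_normal.
Qed.

Lemma fobj_p_update_min eps L Rm p : (0 < D)%N -> 0 < eps ->
  (forall j, eps <= p 0 j) ->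
  fobj Y (L, Rm, p_update Y eps L Rm) <= fobj Y (L, Rm, p).
Proof.
move=> D_gt0 eps_gt0 p_ge; rewrite !fobj_colE; apply: ler_sum => j _.
rewrite mxE /colres; apply: gauss_nll_clamped_min; rewrite ?ltr0n //.
by apply: sumr_ge0 => i _; exact: sqr_ge0.
Qed.

End objective.

Section objective_smooth.
Context {R : realType} {D N d : nat}.
Variable Y : 'M[R]_(D, N).
Implicit Types (w : var_t R D N d) (L : 'M[R]_(D, d)) (Rm : 'M[R]_(N, d)).
Implicit Types (p : 'rV[R]_N).

Lemma differentiable_fobj w : (forall j, 0 < w.2 0 j) -> differentiable (fobj Y) w.
Proof.
move=> p_gt0.
have dLR : differentiable (fun w : var_t R D N d => w.1) w := differentiable_fst w.
have dL i k : differentiable (fun w : var_t R D N d => w.1.1 i k) w.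
  exact: differentiable_comp (differentiable_comp dLR (differentiable_fst _))
    (differentiable_coord _ i k).
have dR j k : differentiable (fun w : var_t R D N d => w.1.2 j k) w.
  exact: differentiable_comp (differentiable_comp dLR (differentiable_snd _))
    (differentiable_coord _ j k).
have dp j : differentiable (fun w : var_t R D N d => w.2 0 j) w.
  exact: differentiable_comp (differentiable_snd w) (differentiable_coord _ 0 j).
have -> : fobj Y = fun w : var_t R D N d =>
    2^-1 * (\sum_i \sum_j (Y i j - \sum_k w.1.1 i k * w.1.2 j k) ^+ 2 / w.2 0 j)
    + D%:R / 2 * \sum_j ln (w.2 0 j).
  apply/funext => -[[L Rm] p]; rewrite fobjE /wnorm.
  congr (_ * _ + _); apply: eq_bigr => i _; apply: eq_bigr => j _.
  by rewrite !mxE; congr ((_ - _) ^+ 2 / _); apply: eq_bigr => k _; rewrite mxE.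
apply: differentiableD; apply: differentiableM => //.
- rewrite -fct_sumE; apply: differentiable_sum => i.
  rewrite -fct_sumE; apply: differentiable_sum => j.
  apply: differentiableM; last exact: differentiableV (dp j) (lt0r_neq0 (p_gt0 j)).
  rewrite -exprfctE; apply: differentiableX; apply: differentiableB => //.
  rewrite -fct_sumE; apply: differentiable_sum => k.
  exact: differentiableM.
- rewrite -fct_sumE; apply: differentiable_sum => j.
  apply: differentiable_comp (dp j) _.
  by apply/derivable1_diffP; apply: ex_derive; apply: is_derive1_ln.
Qed.

Lemma fobj_critical_of_block_min (eps : R) (Ls : 'M[R]_(D, d))
    (Rs : 'M[R]_(N, d)) (ps : 'rV[R]_N) :
  0 < eps -> (forall j, eps <= ps 0 j) ->
  (forall L, fobj Y (Ls, Rs, ps) <= fobj Y (L, Rs, ps)) ->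
  (forall Rm p, (forall j, eps <= p 0 j) ->
     fobj Y (Ls, Rs, ps) <= fobj Y (Ls, Rm, p)) ->
  critical_point (fobj Y) (feas eps) (Ls, Rs, ps).
Proof.
move=> eps_gt0 ps_ge L_min Rp_min.
have df : differentiable (fobj Y) (Ls, Rs, ps).
  by apply: differentiable_fobj => j; exact: lt_le_trans (ps_ge j).
split => // -[[a b] c] c_ge.
have -> : ((a, b, c) : var_t R D N d) - (Ls, Rs, ps)
          = (a - Ls, 0, 0) + (0, b - Rs, c - ps).
  by rewrite -[RHS]/(a - Ls + 0, 0 + (b - Rs), 0 + (c - ps)) addr0 !add0r.
rewrite linearD addr_ge0 //.
all: apply: diff_ge0_of_segment_min => // h /andP[h_gt0 h_le1].
  rewrite -[X in _ <= fobj Y X]/(h *: (a - Ls) + Ls, h *: 0 + Rs, h *: 0 + ps).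
  by rewrite !scaler0 !add0r.
rewrite -[X in _ <= fobj Y X]
  /(h *: 0 + Ls, h *: (b - Rs) + Rs, h *: (c - ps) + ps).
rewrite scaler0 add0r; apply: Rp_min => j; rewrite !mxE.
have := c_ge j; have := ps_ge j; nra.
Qed.

Lemma continuous_fobj_blocks L (y : 'M[R]_(N, d) * 'rV[R]_N) :
  (forall j, 0 < y.2 0 j) ->
  {for (L, y), continuous (fun z : 'M[R]_(D, d) * ('M[R]_(N, d) * 'rV[R]_N) =>
                             fobj Y (z.1, z.2.1, z.2.2))}.
Proof.
move=> y_gt0; apply: differentiable_continuous.
apply: (differentiable_comp
  (f := fun z : 'M[R]_(D, d) * ('M[R]_(N, d) * 'rV[R]_N) =>
          (z.1, z.2.1, z.2.2) : var_t R D N d)).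
  apply: differentiable_pair.
    apply: differentiable_pair; first exact: differentiable_fst.
    exact: differentiable_comp (differentiable_snd _) (differentiable_fst _).
  exact: differentiable_comp (differentiable_snd _) (differentiable_snd _).
exact: differentiable_fobj.
Qed.

End objective_smooth.

Lemma closed_snd_row_ge {R : realType} {T : topologicalType} {N : nat} (eps : R) :
  closed [set y : T * 'rV[R]_N | forall j, eps <= y.2 0 j].
Proof.
have -> : [set y : T * 'rV[R]_N | forall j, eps <= y.2 0 j]
        = \bigcap_(j in setT)
            ((fun y : T * 'rV[R]_N => y.2 0 j) @^-1` [set x | eps <= x]).
  by apply/seteqP; split => [y y_ge j _ | y y_ge j]; [exact: y_ge | exact: y_ge].
apply: closed_bigI => j _; apply: preimage_closed; last exact: closed_ge.
move=> y _; apply: (continuous_comp (f := snd) (g := fun M : 'rV[R]_N => M 0 j)).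
  exact: cvg_snd.
exact: coord_continuous.
Qed.

Theorem theorem2 (R : realType) (D N d : nat) (Y : 'M[R]_(D, N)) (eps : R)
  (U : 'M[R]_D) (s : nat -> R) (V : 'M[R]_N)
  (Lt : nat -> 'M[R]_(D, d)) (Rt : nat -> 'M[R]_(N, d)) (pt : nat -> 'rV[R]_N) :
  (* Y has centered columns: the sample mean of the columns is zero *)
  Y *m (const_mx 1 : 'cV[R]_N) = 0 ->
  (1 <= d)%N -> (d <= D)%N -> (d <= N)%N -> 0 < eps ->
  (* an SVD Y = U Sigma V' *)
  U^T *m U = 1%:M -> V^T *m V = 1%:M ->
  (forall k, 0 <= s k) -> (forall k, (k.+1 < minn D N)%N -> s k.+1 <= s k) ->
  Y = U *m (\matrix_(i < D, j < N) if (i : nat) == j then s i else 0) *m V^T ->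
  (* initialization *)
  Lt 0%N = U *m (\matrix_(i < D, k < d) if (i : nat) == k then Num.sqrt (s k) else 0) ->
  Rt 0%N = V *m (\matrix_(i < N, k < d) if (i : nat) == k then Num.sqrt (s k) else 0) ->
  pt 0%N = const_mx (Num.max (\big[Num.max/0]_(j < N) colres Y (Lt 0%N) (Rt 0%N) j) eps) ->
  (* the matrix inverses in the updates exist *)
  (forall t, (Rt t)^T *m diag_inv (pt t) *m Rt t \in unitmx) ->
  (forall t, (Lt t.+1)^T *m Lt t.+1 \in unitmx) ->
  (* alternating minimization updates *)
  (forall t, Lt t.+1 = Y *m diag_inv (pt t) *m Rt t
                         *m invmx ((Rt t)^T *m diag_inv (pt t) *m Rt t)) ->
  (forall t, Rt t.+1 = Y^T *m Lt t.+1 *m invmx ((Lt t.+1)^T *m Lt t.+1)) ->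
  (forall t, pt t.+1 = \row_j Num.max (colres Y (Lt t.+1) (Rt t.+1) j) eps) ->
  (* every limit point is a critical point *)
  forall (phi : nat -> nat) (ws : var_t R D N d),
    (forall n, (phi n < phi n.+1)%N) ->
    (fun n => (Lt (phi n), Rt (phi n), pt (phi n)) : var_t R D N d) @ \oo --> ws ->
    critical_point (fobj Y) (feas eps) ws.
Proof.
move=> _ d_gt0 d_le_D _ eps_gt0 _ _ _ _ _ _ _ pt0 Rgram_unit Lgram_unit
  Lt_upd Rt_upd pt_upd phi [[Ls Rs] ps] phi_incr sub_cvg.
pose S := [set y : 'M[R]_(N, d) * 'rV[R]_N | forall j, eps <= y.2 0 j].
pose f L (y : 'M[R]_(N, d) * 'rV[R]_N) := fobj Y (L, y.1, y.2).
have S_gt0 y : S y -> forall j, 0 < y.2 0 j by move=> Sy j; exact: lt_le_trans (Sy j).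
have St t : S (Rt t, pt t).
  by case: t => [|t] j; rewrite ?pt0 ?pt_upd mxE le_max lexx orbT.
have L_step t L : f (Lt t.+1) (Rt t, pt t) <= f L (Rt t, pt t).
  rewrite /f Lt_upd; apply: fobj_L_update_min => // j.
  exact/ltW/(S_gt0 _ (St t)).
have Rp_step t y : S y -> f (Lt t.+1) (Rt t.+1, pt t.+1) <= f (Lt t.+1) y.
  move=> Sy; rewrite /f /= pt_upd.
  apply: le_trans (fobj_p_update_min Y _ _ _ y.2 (leq_trans d_gt0 d_le_D) eps_gt0 Sy) _.
  rewrite Rt_upd; apply: fobj_R_update_min => // j; exact/ltW/S_gt0.
have LR_cvg : (Lt (phi n), Rt (phi n)) @[n --> \oo] --> (Ls, Rs).
  exact: (cvg_comp _ fst sub_cvg cvg_fst).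
have blocks_cvg :
    (Lt (phi n), (Rt (phi n), pt (phi n))) @[n --> \oo] --> (Ls, (Rs, ps)).
  exact: (cvg_pair (cvg_comp _ fst LR_cvg cvg_fst)
           (cvg_pair (cvg_comp _ snd LR_cvg cvg_snd) (cvg_comp _ snd sub_cvg cvg_snd))).
have [S_lim L_min Rp_min] := alt_min_limit_point f S Lt _ (closed_snd_row_ge eps)
  (fun L y Sy => continuous_fobj_blocks Y L y (S_gt0 y Sy)) St L_step Rp_step
  phi Ls (Rs, ps) phi_incr blocks_cvg.
apply: fobj_critical_of_block_min => // Rm p Sp.
exact: (Rp_min (Rm, p)).
Qed.
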